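(* Let $p\geqslant1$ and $\varphi,\psi\in\mathfrak M_p$. Then $\varphi=\psi$ is a formal median identity if and only if $\varphi\sim\psi$.
   Context: A median algebra is a set with a ternary operation $m$ satisfying $m(a,a,b)=a$, invariance under permutations of the arguments, and $m(m(a,b,c),b,d)=m(a,b,m(c,b,d))$. Let $\Omega_p=\{\alpha_1,\ldots,\alpha_p\}$ and add two symbols $\langle,\rangle$. The set $\mathfrak M_p$ of formal ternary expressions is the smallest set of finite words over $\Omega_p\cup\{\langle,\rangle\}$ containing each $\alpha_i$ and containing $\langle\varphi_1\varphi_2\varphi_3\rangle$ whenever $\varphi_1,\varphi_2,\varphi_3$ belong to it; each element not in $\Omega_p$ is uniquely of the form $\langle\varphi_1\varphi_2\varphi_3\rangle$. For a set $Y$ with ternary operation $\nu$ and $y_1,\ldots,y_p\in Y$, the realisation $\varphi_Y(y_1,\ldots,y_p)$ is defined inductively by $(\alpha_i)_Y=y_i$ and $\langle\varphi_1\varphi_2\varphi_3\rangle_Y=\nu((\varphi_1)_Y,(\varphi_2)_Y,(\varphi_3)_Y)$. The equation $\varphi=\psi$ is a formal median identity if $\varphi_Y(y_1,\ldots,y_p)=\psi_Y(y_1,\ldots,y_p)$ for every median algebra $(Y,\nu)$ and all $y_i\in Y$. The complexity $\xi$ is defined by $\xi(\alpha_i)=0$ and $\xi(\langle\varphi_1\varphi_2\varphi_3\rangle)=\max_i\xi(\varphi_i)+1$. Elementary transformations are defined inductively on complexity: for $\varphi\in\Omega_p$ the only ones are $\varphi\mapsto\langle\varphi\varphi\psi\rangle$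 ($\psi\in\mathfrak M_p$). For $\varphi$ of complexity $n\geqslant1$: (I) $\varphi\mapsto\langle\varphi\varphi\psi\rangle$ for any $\psi\in\mathfrak M_p$, and if $\varphi=\langle\psi\psi\varphi'\rangle$ then $\varphi\mapsto\psi$; (II) if $\varphi=\langle\varphi_1\varphi_2\varphi_3\rangle$ then $\varphi\mapsto\langle\varphi_{\sigma(1)}\varphi_{\sigma(2)}\varphi_{\sigma(3)}\rangle$ for any permutation $\sigma$; (III) if $\varphi=\langle\langle\varphi_1\varphi_2\varphi_3\rangle\varphi_2\varphi_4\rangle$ then $\varphi\mapsto\langle\varphi_1\varphi_2\langle\varphi_3\varphi_2\varphi_4\rangle\rangle$, and if $\varphi=\langle\varphi_1\varphi_2\langle\varphi_3\varphi_2\varphi_4\rangle\rangle$ then $\varphi\mapsto\langle\langle\varphi_1\varphi_2\varphi_3\rangle\varphi_2\varphi_4\rangle$; (IV) if $\varphi=\langle\varphi_1\varphi_2\varphi_3\rangle$ and $\varphi_1'$ is obtained from $\varphi_1$ by an elementary transformation, then $\varphi\mapsto\langle\varphi_1'\varphi_2\varphi_3\rangle$. $\sim$ denotes the equivalence relation on $\mathfrak M_p$ generated by elementary transformations (transitive closure of the symmetric relation ''obtained by one elementary transformation''). *)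

From mathcomp Require Import all_boot all_fingroup.
From Stdlib Require Import Relation_Operators.
Set Implicit Arguments. Unset Strict Implicit. Unset Printing Implicit Defensive.

Definition is_median_algebra (Y : Type) (m : Y -> Y -> Y -> Y) : Prop :=
  (forall a b, m a a b = a) /\
  (forall a b c,
     m a b c = m b a c /\ m a b c = m a c b /\ m a b c = m c b a /\
     m a b c = m b c a /\ m a b c = m c a b) /\
  (forall a b c d, m (m a b c) b d = m a b (m c b d)).

(* Formal ternary expressions M_p over the alphabet {alpha_1..alpha_p}. *)
Inductive mexpr (p : nat) : Type :=
| Var : 'I_p -> mexpr p
| Node : mexpr p -> mexpr p -> mexpr p -> mexpr p.

Fixpoint realise (p : nat) (Y : Type) (nu : Y -> Y -> Y -> Y) (y : 'I_p -> Y)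
  (e : mexpr p) : Y :=
  match e with
  | Var i => y i
  | Node e1 e2 e3 => nu (realise nu y e1) (realise nu y e2) (realise nu y e3)
  end.

Fixpoint complexity (p : nat) (e : mexpr p) : nat :=
  match e with
  | Var _ => 0
  | Node e1 e2 e3 => (maxn (complexity e1) (maxn (complexity e2) (complexity e3))).+1
  end.

Definition formal_median_identity (p : nat) (phi psi : mexpr p) : Prop :=
  forall (Y : Type) (nu : Y -> Y -> Y -> Y), is_median_algebra nu ->
  forall y : 'I_p -> Y, realise nu y phi = realise nu y psi.

Definition i0 : 'I_3 := @Ordinal 3 0 isT.
Definition i1 : 'I_3 := @Ordinal 3 1 isT.
Definition i2 : 'I_3 := @Ordinal 3 2 isT.

Inductive elem (p : nat) : mexpr p -> mexpr p -> Prop :=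
| ElemI_dup : forall phi psi, elem phi (Node phi phi psi)
| ElemI_abs : forall psi phi', elem (Node psi psi phi') psi
| ElemII : forall (s : 'S_3) (f : 'I_3 -> mexpr p),
    elem (Node (f i0) (f i1) (f i2)) (Node (f (s i0)) (f (s i1)) (f (s i2)))
| ElemIII_l : forall a b c d,
    elem (Node (Node a b c) b d) (Node a b (Node c b d))
| ElemIII_r : forall a b c d,
    elem (Node a b (Node c b d)) (Node (Node a b c) b d)
| ElemIV : forall a a' b c, elem a a' -> elem (Node a b c) (Node a' b c).

Definition mequiv (p : nat) (phi psi : mexpr p) : Prop :=
  clos_trans (mexpr p) (fun x y => elem x y \/ elem y x) phi psi.

(* Soundness: each elementary transformation is a median axiom applied
   inside a context, so realisations are invariant under ~.  Completeness:
   ~ is a congruence, so its classes carry a ternary operation, and the median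
   axioms hold there because each is an elementary transformation; this is the
   free median algebra on alpha_1, ..., alpha_p.  Realising an expression at
   the generators gives back its class, so a formal identity phi = psi forces
   phi ~ psi. *)

From mathcomp Require Import all_boot all_fingroup.
From Stdlib Require Import Relation_Definitions Relation_Operators.
From Stdlib Require Import FunctionalExtensionality PropExtensionality.
From Stdlib Require Import ProofIrrelevance.

Set Implicit Arguments.
Unset Strict Implicit.
Unset Printing Implicit Defensive.

Lemma ord3_cases (i : 'I_3) : i = i0 \/ i = i1 \/ i = i2.
Proof.
case: i => [[|[|[|n]]] lt_i3] //; [left | right; left | right; right];
  exact: val_inj.
Qed.

Lemma median_perm (Y : Type) (m : Y -> Y -> Y -> Y) : is_median_algebra m ->
  forall (s : 'S_3) (f : 'I_3 -> Y),
  m (f (s i0)) (f (s i1)) (f (s i2)) = m (f i0) (f i1) (f i2).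
Proof.
move=> [_ [m_sym _]] s f.
have [E01 [E12 [E02 [E120 E201]]]] := m_sym (f i0) (f i1) (f i2).
have : [&& s i0 != s i1, s i0 != s i2 & s i1 != s i2].
  by rewrite !(inj_eq perm_inj).
by case: (ord3_cases (s i0)) => [->|[->|->]];
  case: (ord3_cases (s i1)) => [->|[->|->]];
  case: (ord3_cases (s i2)) => [->|[->|->]].
Qed.

Lemma realise_elem (p : nat) (Y : Type) (m : Y -> Y -> Y -> Y) (y : 'I_p -> Y)
    (phi psi : mexpr p) :
  is_median_algebra m -> elem phi psi -> realise m y phi = realise m y psi.
Proof.
move=> m_median; have [m_idem [_ m_assoc]] := m_median.
elim=> {phi psi} [phi psi|psi phi'|s f|a b c d|a b c d|a a' b c _ /= ->] //=;
  rewrite ?m_idem ?m_assoc //.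
by rewrite (median_perm m_median s (fun i => realise m y (f i))).
Qed.

Lemma mequiv_sound (p : nat) (phi psi : mexpr p) :
  mequiv phi psi -> formal_median_identity phi psi.
Proof.
move=> phi_psi Y m m_median y.
elim: phi_psi => [u v [uv|vu]|u v w _ -> _ ->] //.
- exact: realise_elem.
- by rewrite (realise_elem y m_median vu).
Qed.

Section ElementaryEquivalence.

Variable p : nat.
Implicit Types a b c : mexpr p.

Lemma mequiv_elem a b : elem a b -> mequiv a b.
Proof. by move=> ab; apply: t_step; left. Qed.

Lemma mequiv_elemV a b : elem b a -> mequiv a b.
Proof. by move=> ba; apply: t_step; right. Qed.

Lemma mequiv_trans a b c : mequiv a b -> mequiv b c -> mequiv a c.
Proof. exact: t_trans. Qed.

Lemma mequiv_refl a : mequiv a a.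
Proof.
apply: (@mequiv_trans _ (Node a a a)).
- exact/mequiv_elem/ElemI_dup.
- exact/mequiv_elem/ElemI_abs.
Qed.

Lemma mequiv_sym a b : mequiv a b -> mequiv b a.
Proof.
elim=> [u v [uv|vu]|u v w _ vu _ wv]; first exact: mequiv_elemV.
  exact: mequiv_elem.
exact: mequiv_trans wv vu.
Qed.

Lemma mequiv_swap01 a b c : mequiv (Node a b c) (Node b a c).
Proof.
apply: mequiv_elem; have := ElemII (tperm i0 i1) (nth a [:: a; b; c]).
by rewrite tpermL tpermR tpermD.
Qed.

Lemma mequiv_swap12 a b c : mequiv (Node a b c) (Node a c b).
Proof.
apply: mequiv_elem; have := ElemII (tperm i1 i2) (nth a [:: a; b; c]).
by rewrite tpermL tpermR tpermD.
Qed.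

Lemma mequiv_swap02 a b c : mequiv (Node a b c) (Node c b a).
Proof.
apply: mequiv_elem; have := ElemII (tperm i0 i2) (nth a [:: a; b; c]).
by rewrite tpermL tpermR tpermD.
Qed.

Lemma mequiv_congr0 a a' b c :
  mequiv a a' -> mequiv (Node a b c) (Node a' b c).
Proof.
elim=> [u v [uv|vu]|u v w _ uv _ vw].
- exact/mequiv_elem/ElemIV.
- exact/mequiv_elemV/ElemIV.
- exact: mequiv_trans uv vw.
Qed.

Lemma mequiv_congr a a' b b' c c' :
  mequiv a a' -> mequiv b b' -> mequiv c c' ->
  mequiv (Node a b c) (Node a' b' c').
Proof.
move=> aa' bb' cc'.
apply: (@mequiv_trans _ (Node a' b c)); first exact: mequiv_congr0.
apply: (@mequiv_trans _ (Node b a' c)); first exact: mequiv_swap01.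
apply: (@mequiv_trans _ (Node b' a' c)); first exact: mequiv_congr0.
apply: (@mequiv_trans _ (Node a' b' c)); first exact: mequiv_swap01.
apply: (@mequiv_trans _ (Node c b' a')); first exact: mequiv_swap02.
apply: (@mequiv_trans _ (Node c' b' a')); first exact: mequiv_congr0.
exact: mequiv_swap02.
Qed.

End ElementaryEquivalence.

Section PropQuotient.

Variables (T : Type) (R : T -> T -> Prop).
Hypotheses (R_refl : reflexive T R) (R_sym : symmetric T R)
  (R_trans : transitive T R).

(* An element of the quotient is an equivalence class, as a predicate;
   extensionality makes the classes of related elements equal.  ~ is not
   known to be decidable, so the boolean quotients of generic_quotient do not
   apply. *)
Definition prop_quotient := {P : T -> Prop | exists x, P = R x}.

Definition eqclass (x : T) : prop_quotient :=
  exist _ (R x) (ex_intro _ x erefl).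

Lemma eqclass_surj (q : prop_quotient) : exists x, q = eqclass x.
Proof. by case: q => P [x defP]; exists x; apply: subset_eq_compat. Qed.

Lemma eqclass_eq x y : eqclass x = eqclass y <-> R x y.
Proof.
split=> [/(f_equal sval) /= -> | Rxy]; first exact: R_refl.
apply/subset_eq_compat/functional_extensionality => z.
apply: propositional_extensionality; split; first exact: R_trans (R_sym Rxy).
exact: R_trans Rxy.
Qed.

Variable op : T -> T -> T -> T.
Hypothesis op_congr : forall a a' b b' c c',
  R a a' -> R b b' -> R c c' -> R (op a b c) (op a' b' c').

Definition lift3_pred (P Q S : T -> Prop) (x : T) : Prop :=
  exists a b c, [/\ P a, Q b, S c & R (op a b c) x].

Lemma lift3_pred_eqclass a b c :
  lift3_pred (R a) (R b) (R c) = R (op a b c).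
Proof.
apply: functional_extensionality => x; apply: propositional_extensionality.
split=> [[a' [b' [c' [aa' bb' cc' op'x]]]] | opx].
- exact: R_trans (op_congr aa' bb' cc') op'x.
- by exists a, b, c; split; rewrite ?R_refl.
Qed.

Lemma lift3_pred_closed (q1 q2 q3 : prop_quotient) :
  exists x, lift3_pred (sval q1) (sval q2) (sval q3) = R x.
Proof.
case: (eqclass_surj q1) (eqclass_surj q2) (eqclass_surj q3).
move=> a -> [b ->] [c ->] /=.
by exists (op a b c); apply: lift3_pred_eqclass.
Qed.

Definition lift3 (q1 q2 q3 : prop_quotient) : prop_quotient :=
  exist _ _ (lift3_pred_closed q1 q2 q3).

Lemma lift3_eqclass a b c :
  lift3 (eqclass a) (eqclass b) (eqclass c) = eqclass (op a b c).
Proof. exact/subset_eq_compat/lift3_pred_eqclass. Qed.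

End PropQuotient.

Section FreeMedianAlgebra.

Variable p : nat.

Definition free_median := prop_quotient (@mequiv p).

Definition free_median_op :
    free_median -> free_median -> free_median -> free_median :=
  lift3 (@mequiv_refl p) (@mequiv_trans p) (@mequiv_congr p).

Notation cls := (@eqclass _ (@mequiv p)).

Lemma free_median_op_eqclass a b c :
  free_median_op (cls a) (cls b) (cls c) = cls (Node a b c).
Proof. exact: lift3_eqclass. Qed.

Lemma eqclass_mequiv a b : cls a = cls b <-> mequiv a b.
Proof.
exact: (eqclass_eq (@mequiv_refl p) (@mequiv_sym p) (@mequiv_trans p) a b).
Qed.

Lemma free_median_is_median : is_median_algebra free_median_op.
Proof.
have swap01 a b c : cls (Node a b c) = cls (Node b a c).
  exact/eqclass_mequiv/mequiv_swap01.
have swap12 a b c : cls (Node a b c) = cls (Node a c b).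
  exact/eqclass_mequiv/mequiv_swap12.
have swap02 a b c : cls (Node a b c) = cls (Node c b a).
  exact/eqclass_mequiv/mequiv_swap02.
split; [|split].
- move=> x y; case: (eqclass_surj x) (eqclass_surj y) => a -> [b ->].
  by rewrite free_median_op_eqclass; apply/eqclass_mequiv/mequiv_elem/ElemI_abs.
- move=> x y z.
  case: (eqclass_surj x) (eqclass_surj y) (eqclass_surj z).
  move=> a -> [b ->] [c ->].
  rewrite !free_median_op_eqclass.
  split; [exact: swap01 | split; [exact: swap12 | split; [exact: swap02 |]]].
  by split; [rewrite swap01 swap12 | rewrite swap12 swap01].
- move=> x y z w.
  case: (eqclass_surj x) (eqclass_surj y) (eqclass_surj z) (eqclass_surj w).
  move=> a -> [b ->] [c ->] [d ->].
  rewrite !free_median_op_eqclass.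
  exact/eqclass_mequiv/mequiv_elem/ElemIII_l.
Qed.

Lemma realise_generators (e : mexpr p) :
  realise free_median_op (fun i => cls (Var i)) e = cls e.
Proof.
elim: e => [i|a IHa b IHb c IHc] //=.
by rewrite IHa IHb IHc free_median_op_eqclass.
Qed.

End FreeMedianAlgebra.

Theorem corollary3p10 (p : nat) (hp : 1 <= p) (phi psi : mexpr p) :
  formal_median_identity phi psi <-> mequiv phi psi.
Proof.
split=> [phi_psi | ]; last exact: mequiv_sound.
apply/eqclass_mequiv; rewrite -!realise_generators.
exact: phi_psi _ _ (@free_median_is_median p) _.
Qed.
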